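(* Let $R$ be a reflexive relation on $U$. For every $(A,B)\in\mathrm{DM(RS)}$, $(A,B)=\bigvee\{(\{a\}^{\vartriangle\blacktriangledown},\{a\}^{\vartriangle\blacktriangle})\mid a\in A\}\ \vee\ \bigvee\{(\{b\}^{\blacktriangledown},\{b\}^{\blacktriangle})\mid b\in B^{\triangledown}\}$, joins taken in $\mathrm{DM(RS)}$.
   Context: Let $U$ be a set and $R\subseteq U\times U$ a binary relation. For $x\in U$, $R(x)=\{y\in U\mid (x,y)\in R\}$ and $\breve R(x)=\{y\in U\mid (y,x)\in R\}$. For $X\subseteq U$: $X^{\blacktriangledown}=\{x\in U\mid R(x)\subseteq X\}$, $X^{\blacktriangle}=\{x\in U\mid R(x)\cap X\neq\emptyset\}$, $X^{\triangledown}=\{x\in U\mid \breve R(x)\subseteq X\}$, $X^{\vartriangle}=\{x\in U\mid \breve R(x)\cap X\neq\emptyset\}$; composites like $X^{\vartriangle\blacktriangledown}$ mean $(X^{\vartriangle})^{\blacktriangledown}$. $\wp(U)^{\blacktriangledown}=\{X^{\blacktriangledown}\mid X\subseteq U\}$, $\wp(U)^{\blacktriangle}=\{X^{\blacktriangle}\mid X\subseteq U\}$. $\mathcal S=\{x\in U\mid |R(x)|=1\}$. $\mathrm{RS}=\{(X^{\blacktriangledown},X^{\blacktriangle})\mid X\subseteq U\}$ ordered coordinatewise; $\mathrm{DM(RS)}$ is its Dedekind–MacNeille completion, identified with $\{(A,B)\in\wp(U)^{\blacktriangledown}\times\wp(U)^{\blacktriangle}\mid A^{\vartriangle\blacktriangle}\subseteq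 B,\ A\cap\mathcal S=B\cap\mathcal S\}$ ordered coordinatewise, with meets $\bigwedge_i(X_i,Y_i)=(\bigcap_iX_i,(\bigcap_iY_i)^{\triangledown\blacktriangle})$ and joins $\bigvee_i(X_i,Y_i)=((\bigcup_iX_i)^{\vartriangle\blacktriangledown},\bigcup_iY_i)$. *)

From mathcomp Require Import all_boot.
From mathcomp Require Import boolp classical_sets.
Set Implicit Arguments. Unset Strict Implicit. Unset Printing Implicit Defensive.
Local Open Scope classical_set_scope.

Section RoughDefs.
Variables (U : Type) (R : U -> U -> Prop).

Definition Rimg (x : U) : set U := [set y | R x y].
Definition Rcon (x : U) : set U := [set y | R y x].

(* X^▼, X^▲, X^▽, X^△ *)
Definition boxR (X : set U) : set U := [set x | Rimg x `<=` X].
Definition diaR (X : set U) : set U := [set x | Rimg x `&` X !=set0].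
Definition boxC (X : set U) : set U := [set x | Rcon x `<=` X].
Definition diaC (X : set U) : set U := [set x | Rcon x `&` X !=set0].

Definition singR : set U := [set x | exists y, Rimg x = [set y]].

(* (A,B) ∈ DM(RS), in the paper's identification *)
Definition inDM (A B : set U) : Prop :=
  [/\ exists X, A = boxR X,
      exists Y, B = diaR Y,
      diaR (diaC A) `<=` B
    & A `&` singR = B `&` singR].

Definition DMjoin (F : set (set U * set U)) : set U * set U :=
  (boxR (diaC (\bigcup_(p in F) p.1)), \bigcup_(p in F) p.2).

Definition DMjoin2 (p q : set U * set U) : set U * set U :=
  DMjoin [set p; q].
End RoughDefs.

(* Write A = X^▼ and B = Y^▲.  Since △ is left adjoint to ▼, Z ⊆ A forces
   Z^{△▼} ⊆ A, and A ⊆ A^{△▼} always holds; so the closures {a}^{△▼} (a ∈ A)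
   join to A.  A pair ({b}^▼, {b}^▲) with b ∈ B^▽ has {b}^▼ nonempty only if
   R(b) = {b}, i.e. b ∈ S ∩ B = S ∩ A, so it adds nothing to the first
   component.  On the second components, {a}^{△▲} ⊆ A^{△▲} ⊆ B, {b}^▲ ⊆ B
   because b ∈ B^▽, and every x ∈ Y^▲ lies in {y}^▲ for a witness y ∈ Y,
   which belongs to B^▽.  Reflexivity enters through B^▽ ⊆ B and {b}^▼ ⊆ {b}. *)
From mathcomp Require Import all_boot.
From mathcomp Require Import boolp classical_sets.
Set Implicit Arguments. Unset Strict Implicit. Unset Printing Implicit Defensive.
Local Open Scope classical_set_scope.

Section RoughOperators.
Variables (U : Type) (R : U -> U -> Prop).

Lemma diaC_sub_boxR (Z X : set U) : (diaC R Z `<=` X) <-> (Z `<=` boxR R X).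
Proof.
split=> [ZX z Zz y Rzy | ZX y [z [Rzy Zz]]]; first by apply: ZX; exists z.
exact: ZX z Zz y Rzy.
Qed.

Lemma boxR_diaC_sub (Z X : set U) :
  Z `<=` boxR R X -> boxR R (diaC R Z) `<=` boxR R X.
Proof.
move=> /diaC_sub_boxR ZX x Hx y Rxy.
by have [z [Rzy Zz]] := Hx y Rxy; apply: ZX; exists z.
Qed.

Lemma diaR_diaC_subset (Z A : set U) :
  Z `<=` A -> diaR R (diaC R Z) `<=` diaR R (diaC R A).
Proof.
move=> ZA x [y [Rxy [z [Rzy Zz]]]].
by exists y; split=> //; exists z; split=> //; apply: ZA.
Qed.

Lemma sub_boxR_diaC (Z : set U) : Z `<=` boxR R (diaC R Z).
Proof. by move=> z Zz y Rzy; exists z. Qed.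

Lemma DMjoin2E (p q : set U * set U) :
  DMjoin2 R p q = (boxR R (diaC R (p.1 `|` q.1)), p.2 `|` q.2).
Proof. by rewrite /DMjoin2 /DMjoin !bigcup_setU1 !bigcup_set1. Qed.

Lemma DMjoin_fst_sub (F : set (set U * set U)) (X : set U) :
  (forall p, F p -> p.1 `<=` boxR R X) -> (DMjoin R F).1 `<=` boxR R X.
Proof. by move=> FX; apply: boxR_diaC_sub; apply: bigcup_sub. Qed.

Hypothesis Rrefl : forall x, R x x.

Lemma boxC_sub (X : set U) : boxC R X `<=` X.
Proof. by move=> x; apply; apply: Rrefl. Qed.

Lemma boxR_set1_sub (b : U) : boxR R [set b] `<=` [set b] `&` singR R.
Proof.
move=> x Hx; have xb : x = b by apply: Hx; apply: Rrefl.
split=> //; exists b; apply/seteqP; split=> [z /Hx // | z ->].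
by rewrite xb; apply: Rrefl.
Qed.

End RoughOperators.

Section Generators.
Variables (U : Type) (R : U -> U -> Prop).

Definition closure_gens (A : set U) : set (set U * set U) :=
  [set p | exists2 a, A a & p = (boxR R (diaC R [set a]), diaR R (diaC R [set a]))].

Definition boxC_gens (B : set U) : set (set U * set U) :=
  [set p | exists2 b, boxC R B b & p = (boxR R [set b], diaR R [set b])].

Lemma sub_closure_gens_fst (A : set U) : A `<=` (DMjoin R (closure_gens A)).1.
Proof.
move=> x Ax; rewrite /DMjoin /=; apply: sub_boxR_diaC.
exists (boxR R (diaC R [set x]), diaR R (diaC R [set x])); first by exists x.
exact: sub_boxR_diaC.
Qed.

Lemma closure_gens_fst_sub (X : set U) :
  (DMjoin R (closure_gens (boxR R X))).1 `<=` boxR R X.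
Proof.
apply: DMjoin_fst_sub => _ [a Aa ->] /=.
by apply: boxR_diaC_sub => _ ->.
Qed.

Lemma closure_gens_snd_sub (A : set U) :
  (DMjoin R (closure_gens A)).2 `<=` diaR R (diaC R A).
Proof. by move=> x [_ [a Aa ->]] /=; apply: diaR_diaC_subset => _ ->. Qed.

Lemma boxC_gens_snd_sub (B : set U) : (DMjoin R (boxC_gens B)).2 `<=` B.
Proof. by move=> x [_ [b Bb ->]] [y [Rxy yb]]; apply: Bb; rewrite -yb. Qed.

Lemma sub_boxC_gens_snd (Y : set U) :
  diaR R Y `<=` (DMjoin R (boxC_gens (diaR R Y))).2.
Proof.
move=> x [y [Rxy Yy]]; exists (boxR R [set y], diaR R [set y]) => /=.
  by exists y => // z Rzy; exists y.
by exists y.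
Qed.

Lemma boxC_gens_fst_sub (X B : set U) : (forall x, R x x) ->
  boxR R X `&` singR R = B `&` singR R ->
  (DMjoin R (boxC_gens B)).1 `<=` boxR R X.
Proof.
move=> Rrefl singR_eq.
apply: DMjoin_fst_sub => _ [b Bb ->] x /(boxR_set1_sub Rrefl) [-> Sb] /=.
suff : (boxR R X `&` singR R) b by case.
by rewrite singR_eq; split=> //; apply: (boxC_sub Rrefl).
Qed.

End Generators.

Theorem mainTheorem14 (U : Type) (R : U -> U -> Prop)
  (Rrefl : forall x, R x x) (A B : set U) :
  inDM R A B ->
  (A, B) =
  DMjoin2 R
    (DMjoin R [set p | exists2 a, A a &
        p = (boxR R (diaC R [set a]), diaR R (diaC R [set a]))])
    (DMjoin R [set p | exists2 b, boxC R B b &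
        p = (boxR R [set b], diaR R [set b])]).
Proof.
case=> [[X ->] [Y ->] closed_sub singR_eq].
rewrite -/(closure_gens R _) -/(boxC_gens R _) DMjoin2E.
congr pair; apply/seteqP; split.
- by move=> x Ax; apply: sub_boxR_diaC; left; apply: sub_closure_gens_fst.
- apply: boxR_diaC_sub; rewrite subUset; split.
    exact: closure_gens_fst_sub.
  exact: boxC_gens_fst_sub Rrefl singR_eq.
- by move=> x Bx; right; apply: sub_boxC_gens_snd.
- rewrite subUset; split; last exact: boxC_gens_snd_sub.
  by apply: subset_trans closed_sub; apply: closure_gens_snd_sub.
Qed.
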